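(* Let $\iota:\emptyset\to\{\bullet\}$, let $M:D\to E$ be the map with $D=\{x,y,z,c\}$ having open sets $\emptyset,\{x,y,z\},D$, $E=\{u,v\}$ antidiscrete, $M(x)=M(y)=u$, $M(z)=M(c)=v$, and let $k:\{\bullet\}\to S$ send the point to the closed point $c$ of the Sierpinski space $S=\{o,c\}$ (open sets $\emptyset,\{o\},S$). Then, in $\mathrm{Top}$, $\{\iota\}^{rllrrl}=\{M\}^l=\{k\}^{lr}$, and this is the class of closed subspace embeddings.
   Context: For continuous maps $f:A\to B$, $g:C\to D'$, $f\pitchfork g$ means: for all continuous $t:A\to C$, $b:B\to D'$ with $g\circ t=b\circ f$ there is continuous $d:B\to C$ with $d\circ f=t$, $g\circ d=b$. For a class $P$, $P^l=\{f: f\pitchfork g\ \forall g\in P\}$, $P^r=\{g: f\pitchfork g\ \forall f\in P\}$; for a word $w$ in $l,r$, $P^w$ applies these operations from left to right. *)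

From HB Require Import structures.
From mathcomp Require Import all_boot all_order all_algebra.
From mathcomp Require Import all_classical all_reals all_analysis.

Set Implicit Arguments.
Unset Strict Implicit.
Unset Printing Implicit Defensive.
Local Open Scope classical_set_scope.

Definition chain_op (T : Type) (U : set T) : set_system T :=
  fun V => V = set0 \/ V = U \/ V = setT.

Lemma chain_opT (T : Type) (U : set T) : chain_op U setT.
Proof. by right; right. Qed.

Lemma chain_opI (T : Type) (U : set T) : setI_closed (chain_op U).
Proof.
move=> A B [->|[->|->]] [->|[->|->]];
  rewrite ?set0I ?setI0 ?setIid ?setTI ?setIT; rewrite /chain_op; tauto.
Qed.

Lemma chain_op_bigU (T : Type) (U : set T) (I : Type) (f : I -> set T) :
  (forall i, chain_op U (f i)) -> chain_op U (\bigcup_i f i).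
Proof.
move=> hf.
have [[i fiT]|nT] := pselect (exists i, f i = setT).
  right; right; apply/seteqP; split=> // x _; exists i => //; by rewrite fiT.
have [[i fiU]|nU] := pselect (exists i, f i = U).
  right; left; apply/seteqP; split.
    move=> x [j _ fjx]; case: (hf j) => [fj0|[fjU|fjT]].
    - by rewrite fj0 in fjx.
    - by rewrite fjU in fjx.
    - by exfalso; apply: nT; exists j.
  by move=> x Ux; exists i => //; rewrite fiU.
left; apply/seteqP; split=> // x [j _ fjx]; case: (hf j) => [fj0|[fjU|fjT]].
- by rewrite fj0 in fjx.
- by exfalso; apply: nU; exists j.
- by exfalso; apply: nT; exists j.
Qed.

Inductive Dpt := Dx | Dy | Dz | Dc.
Definition Dpt_to (p : Dpt) : nat := match p with Dx => 0 | Dy => 1 | Dz => 2 | Dc => 3 end%N.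
Definition Dpt_of (n : nat) : Dpt := match n with 0 => Dx | 1 => Dy | 2 => Dz | _ => Dc end%N.
Lemma Dpt_K : cancel Dpt_to Dpt_of. Proof. by case. Qed.
HB.instance Definition _ := Countable.copy Dpt (can_type Dpt_K).
HB.instance Definition _ := isOpenTopological.Build Dpt
  (@chain_opT _ [set p | p <> Dc]) (@chain_opI _ _) (@chain_op_bigU _ _).

Inductive Pt := bullet.
Definition Pt_to (_ : Pt) : nat := 0%N.
Definition Pt_of (_ : nat) : Pt := bullet.
Lemma Pt_K : cancel Pt_to Pt_of. Proof. by case. Qed.
HB.instance Definition _ := Countable.copy Pt (can_type Pt_K).
HB.instance Definition _ := isOpenTopological.Build Pt
  (@chain_opT _ set0) (@chain_opI _ _) (@chain_op_bigU _ _).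

Inductive Emp : Type := .
Definition Emp_to (e : Emp) : nat := match e with end.
Definition Emp_of (_ : nat) : option Emp := None.
Lemma Emp_K : pcancel Emp_to Emp_of. Proof. by case. Qed.
HB.instance Definition _ := Countable.copy Emp (pcan_type Emp_K).
HB.instance Definition _ := isOpenTopological.Build Emp
  (@chain_opT _ set0) (@chain_opI _ _) (@chain_op_bigU _ _).

Inductive Ept := Eu | Ev.
Definition Ept_to (p : Ept) : nat := match p with Eu => 0 | Ev => 1 end%N.
Definition Ept_of (n : nat) : Ept := match n with 0 => Eu | _ => Ev end%N.
Lemma Ept_K : cancel Ept_to Ept_of. Proof. by case. Qed.
HB.instance Definition _ := Countable.copy Ept (can_type Ept_K).
HB.instance Definition _ := isOpenTopological.Build Ept
  (@chain_opT _ set0) (@chain_opI _ _) (@chain_op_bigU _ _).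

Inductive Spt := So | Sc.
Definition Spt_to (p : Spt) : nat := match p with So => 0 | Sc => 1 end%N.
Definition Spt_of (n : nat) : Spt := match n with 0 => So | _ => Sc end%N.
Lemma Spt_K : cancel Spt_to Spt_of. Proof. by case. Qed.
HB.instance Definition _ := Countable.copy Spt (can_type Spt_K).
HB.instance Definition _ := isOpenTopological.Build Spt
  (@chain_opT _ [set So]) (@chain_opI _ _) (@chain_op_bigU _ _).

Lemma open_DptE : @open Dpt = chain_op [set p | p <> Dc]. Proof. by []. Qed.
Lemma open_EptE : @open Ept = chain_op set0. Proof. by []. Qed.
Lemma open_SptE : @open Spt = chain_op [set So]. Proof. by []. Qed.
Lemma open_PtE : @open Pt = chain_op set0. Proof. by []. Qed.

Definition iota_map (e : Emp) : Pt := match e with end.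
Definition Mmap (p : Dpt) : Ept :=
  match p with Dx | Dy => Eu | Dz | Dc => Ev end.
Definition kmap (_ : Pt) : Spt := Sc.

Definition mclass := forall (A B : topologicalType), (A -> B) -> Prop.

Definition lifts (A B C D : topologicalType) (f : A -> B) (g : C -> D) : Prop :=
  forall (t : A -> C) (b : B -> D), continuous t -> continuous b ->
    g \o t = b \o f ->
    exists d : B -> C, [/\ continuous d, d \o f = t & g \o d = b].

Definition lorth (P : mclass) : mclass := fun A B f =>
  continuous f /\ forall (C D : topologicalType) (g : C -> D), P C D g -> lifts f g.
Definition rorth (P : mclass) : mclass := fun C D g =>
  continuous g /\ forall (A B : topologicalType) (f : A -> B), P A B f -> lifts f g.

Definition single (X Y : topologicalType) (h : X -> Y) : mclass := fun A B f =>
  existT (fun AB : topologicalType * topologicalType => AB.1 -> AB.2) (A, B) f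
  = existT (fun AB : topologicalType * topologicalType => AB.1 -> AB.2) (X, Y) h.

Definition same_class (P Q : mclass) : Prop :=
  forall (A B : topologicalType) (f : A -> B), P A B f <-> Q A B f.

Definition closed_embedding : mclass := fun A B f =>
  [/\ continuous f, injective f, closed (range f) &
      forall U : set A, open U -> exists V : set B, open V /\ U = f @^-1` V].

From HB Require Import structures.
From mathcomp Require Import all_boot all_classical all_analysis.

(* Lifting against [Mmap] detects
   injectivity, closedness of the image and the subspace topology, each through
   one square into the four-point space; [{kmap}^l] consists of the maps with
   dense image, and the maps right orthogonal to these are again exactly the
   closed embeddings.
   On the other side [{iota}^r] are the surjections and [{iota}^rll] the maps
   whose image meets every nonempty clopen set.  Since dense maps are among them,
   [{iota}^rllr] contains only closed embeddings, so [Mmap] lies in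
   [{iota}^rllrr] and [{iota}^rllrrl] is contained in [{Mmap}^l].  Conversely, a
   closed embedding f : A -> B with image R is compared with a |-> (f a, oo) in
   B x Y, where Y adds to a huge set of tags a point oo with co-countable
   neighbourhoods and the points (x, oo), x outside R, are made isolated.  This map
   is in [{iota}^rllr], and a lift against it becomes a lift for f once the points
   outside R are sent to a single tag, chosen by a diagonal argument to lie in all
   the neighbourhoods that matter. *)

Set Implicit Arguments.
Unset Strict Implicit.
Unset Printing Implicit Defensive.
Local Open Scope classical_set_scope.

(* The axioms are parameters so that every family of open sets gets its own
   carrier, on which the instances below can be declared. *)
Definition topology_of_opens (T : Type) (op : set_system T) (opT : op setT)
  (opI : setI_closed op)
  (opU : forall (I : Type) (F : I -> set T),
     (forall i, op (F i)) -> op (\bigcup_i F i)) : Type := T.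

Section TopologyOfOpens.
Variables (T : Type) (op : set_system T) (opT : op setT) (opI : setI_closed op)
  (opU : forall (I : Type) (F : I -> set T),
     (forall i, op (F i)) -> op (\bigcup_i F i)).

HB.instance Definition _ := gen_eqMixin (topology_of_opens opT opI opU).
HB.instance Definition _ := gen_choiceMixin (topology_of_opens opT opI opU).
HB.instance Definition _ :=
  isOpenTopological.Build (topology_of_opens opT opI opU) opT opI opU.

Lemma topology_of_opensE : @open (topology_of_opens opT opI opU) = op.
Proof. by []. Qed.
End TopologyOfOpens.

Lemma single_transport (X Y : topologicalType) (h : X -> Y) (P : mclass)
    (C D : topologicalType) (g : C -> D) :
  single h g -> P X Y h -> P C D g.
Proof.
move=> E Ph.
have Q (s : {AB : topologicalType * topologicalType & AB.1 -> AB.2}) :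
  s = existT _ (X, Y) h -> P (projT1 s).1 (projT1 s).2 (projT2 s) by move->.
exact: Q _ E.
Qed.

Lemma lorth_singleP (X Y A B : topologicalType) (h : X -> Y) (f : A -> B) :
  lorth (single h) f <-> continuous f /\ lifts f h.
Proof.
split=> [[cf L]|[cf L]]; first by split=> //; apply: L.
split=> // C D g E.
exact: (single_transport (P := fun C D (g : C -> D) => lifts f g) E L).
Qed.

Lemma rorth_singleP (X Y C D : topologicalType) (h : X -> Y) (g : C -> D) :
  rorth (single h) g <-> continuous g /\ lifts h g.
Proof.
split=> [[cg L]|[cg L]]; first by split=> //; apply: L.
split=> // A B f E.
exact: (single_transport (P := fun A B (f : A -> B) => lifts f g) E L).
Qed.


Lemma open_preimage (X Y : topologicalType) (f : X -> Y) (V : set Y) :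
  continuous f -> open V -> open (f @^-1` V).
Proof. by move/continuousP; apply. Qed.

Lemma continuous_subsingleton (X Y : topologicalType) (f : X -> Y) :
  (forall x y : X, x = y) -> continuous f.
Proof.
move=> X1; apply/continuousP => V _.
have [[x Vfx]|nV] := pselect (exists x, V (f x)).
  rewrite (_ : _ @^-1` _ = setT); first exact: openT.
  by apply/seteqP; split=> // y _; rewrite /= (X1 y x).
rewrite (_ : _ @^-1` _ = set0); first exact: open0.
by apply/seteqP; split=> // y Vfy; apply: nV; exists y.
Qed.

Lemma continuous_Pt (X : topologicalType) (f : Pt -> X) : continuous f.
Proof. by apply: continuous_subsingleton; do 2 case. Qed.

Lemma continuous_Emp (X : topologicalType) (f : Emp -> X) : continuous f.
Proof. by apply: continuous_subsingleton; case. Qed.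

Lemma continuous_chainP (X Y : topologicalType) (U : set Y) (f : X -> Y) :
  @open Y = chain_op U -> continuous f <-> open (f @^-1` U).
Proof.
move=> oY; split=> [cf|oU]; first by apply: open_preimage; rewrite // oY; right; left.
apply/continuousP => V; rewrite oY => -[->|[->|->]] //.
  by rewrite preimage_set0; exact: open0.
by rewrite preimage_setT; exact: openT.
Qed.

Lemma continuous_Ept (X : topologicalType) (f : X -> Ept) : continuous f.
Proof.
by apply/(continuous_chainP _ open_EptE); rewrite preimage_set0; exact: open0.
Qed.

Definition initial_map (A B : topologicalType) (f : A -> B) :=
  forall U, open U -> exists V, open V /\ U = f @^-1` V.

Lemma lifts_in_range (A B C D : topologicalType) (f : A -> B) (g : C -> D)
    (t : A -> C) (b : B -> D) :
  injective g -> initial_map g -> continuous b -> (forall y, exists c, g c = b y) ->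
  g \o t = b \o f -> exists d : B -> C, [/\ continuous d, d \o f = t & g \o d = b].
Proof.
move=> injg ig cb gb e.
pose d y := projT1 (cid (gb y)).
have gd y : g (d y) = b y by rewrite /d; case: cid.
exists d; split; last by apply/funext => y /=.
- apply/continuousP => U /ig [V [oV ->]].
  rewrite (_ : _ @^-1` _ = b @^-1` V); first exact: open_preimage.
  by apply/seteqP; split=> y /=; rewrite gd.
- by apply/funext => a /=; apply: injg; rewrite gd; exact: esym (congr1 (@^~ a) e).
Qed.

Lemma closed_embedding_lifts_Mmap (A B : topologicalType) (f : A -> B) :
  closed_embedding f -> lifts f Mmap.
Proof.
move=> [cf injf clf inf] t b ct cb e.
pose d y := if pselect (exists a, f a = y) is left H then t (projT1 (cid H))
  else if b y is Eu then Dx else Dz.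
have dE a : d (f a) = t a.
  rewrite /d; case: pselect => [H|[]]; last by exists a.
  by case: cid => a' /= /injf ->.
have dN y : ~ (exists a, f a = y) -> d y <> Dc /\ Mmap (d y) = b y.
  by rewrite /d; case: pselect => // _ _; case: (b y).
exists d; split.
- apply/(continuous_chainP _ open_DptE).
  have [V [oV eV]] := inf _ ((continuous_chainP _ open_DptE).1 ct).
  suff -> : d @^-1` [set p | p <> Dc] = V `|` ~` range f.
    exact: openU oV (closed_openC clf).
  apply/seteqP; split=> y /=; have [[a <-]|nR] := pselect (exists a, f a = y).
  + by rewrite dE => tDc; left; change ((f @^-1` V) a); rewrite -eV.
  + by move=> _; right=> -[a _ fay]; apply: nR; exists a.
  + rewrite dE => -[Vfa|[]]; last by exists a.
    by change ((t @^-1` [set p | p <> Dc]) a); rewrite eV.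
  + by move=> _; exact: (dN _ nR).1.
- by apply/funext => a /=; rewrite dE.
- apply/funext => y /=; have [[a <-]|nR] := pselect (exists a, f a = y).
    by rewrite dE; exact: (congr1 (@^~ a) e).
  exact: (dN _ nR).2.
Qed.

Lemma lifts_Mmap_closed_embedding (A B : topologicalType) (f : A -> B) :
  continuous f -> lifts f Mmap -> closed_embedding f.
Proof.
move=> cf L; have openD := (continuous_chainP _ open_DptE).
split=> //.
- move=> a1 a2 e12; pose t a := if a == a1 then Dx else Dy.
  have [||d [_ df _]] := L t (fun _ => Eu) _ (@continuous_Ept _ _).
  + apply/openD; rewrite (_ : _ @^-1` _ = setT); first exact: openT.
    by apply/seteqP; split=> // a _ /=; rewrite /t; case: (a == a1).
  + by apply/funext => a /=; rewrite /t; case: (a == a1).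
  have : t a1 = t a2 by rewrite -(congr1 (@^~ a1) df) -(congr1 (@^~ a2) df) /= e12.
  by rewrite /t eqxx; case: eqP.
- pose b y := if `[< range f y >] then Ev else Eu.
  have [|d [cd df Md]] :=
    L (fun _ => Dc) b (@cst_continuous _ _ _) (@continuous_Ept _ _).
    by apply/funext => a /=; rewrite /b asboolT //; exists a.
  suff -> : range f = ~` (d @^-1` [set p | p <> Dc]) by exact/open_closedC/openD.
  apply/seteqP; split=> y /=; first by move=> [a _ <-]; rewrite -(congr1 (@^~ a) df).
  move=> /contrapT dy; have := congr1 (@^~ y) Md.
  by rewrite /= dy /b; case: asboolP.
- move=> U oU; pose t a := if `[< U a >] then Dz else Dc.
  have [||d [cd df _]] := L t (fun _ => Ev) _ (@continuous_Ept _ _).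
  + apply/openD; rewrite (_ : _ @^-1` _ = U) //.
    by apply/seteqP; split=> a /=; rewrite /t; case: asboolP.
  + by apply/funext => a /=; rewrite /t; case: asboolP.
  exists (d @^-1` [set p | p <> Dc]); split; first exact/openD.
  have dfE a : d (f a) = t a := congr1 (@^~ a) df.
  by apply/seteqP; split=> a /=; rewrite dfE /t; case: asboolP.
Qed.

Lemma lorth_MmapP (A B : topologicalType) (f : A -> B) :
  lorth (single Mmap) f <-> closed_embedding f.
Proof.
rewrite lorth_singleP; split=> [[cf L]|cef]; first exact: lifts_Mmap_closed_embedding.
by split; [case: cef|exact: closed_embedding_lifts_Mmap].
Qed.

Lemma dense_rangeP (A B : topologicalType) (f : A -> B) :
  dense (range f) <-> forall O, open O -> (forall a, ~ O (f a)) -> O = set0.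
Proof.
split=> [df O oO nO|H O [y Oy] oO].
- apply/seteqP; split=> // y Oy.
  by have [z [Oz [a _ faz]]] := df O (ex_intro _ y Oy) oO; apply: (nO a); rewrite faz.
- apply: contrapT => nI; suff O0 : O = set0 by rewrite O0 in Oy.
  by apply: H => // a Ofa; apply: nI; exists (f a); split=> //; exists a.
Qed.

Lemma lifts_kmapP (A B : topologicalType) (f : A -> B) :
  lifts f kmap <-> dense (range f).
Proof.
have openS := continuous_chainP _ open_SptE.
rewrite dense_rangeP; split=> [L O oO nO|D t b ct cb e].
- pose b y := if `[< O y >] then So else Sc.
  have cb : continuous b.
    apply/openS; rewrite (_ : _ @^-1` _ = O) //.
    by apply/seteqP; split=> y /=; rewrite /b; case: asboolP.
  have [|d [_ _ kd]] := L (fun _ => bullet) b (@cst_continuous _ _ _) cb.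
    by apply/funext => a /=; rewrite /b asboolF //; exact: nO.
  apply/seteqP; split=> // y Oy; have := congr1 (@^~ y) kd.
  by rewrite /= /kmap /b asboolT.
- have O0 : b @^-1` [set So] = set0.
    apply: D; first exact/openS.
    by move=> a /=; have /= <- := congr1 (@^~ a) e.
  exists (fun _ => bullet); split; first exact: cst_continuous.
    by apply/funext => a; case: (t a).
  apply/funext => y /=; case E : (b y) => //.
  by have : (b @^-1` [set So]) y by []; rewrite O0.
Qed.

Lemma closed_embedding_lifts_dense (A B C D : topologicalType)
    (f : A -> B) (g : C -> D) :
  closed_embedding g -> dense (range f) -> lifts f g.
Proof.
move=> [cg injg clg ig] /dense_rangeP df t b ct cb e.
apply: lifts_in_range => // y; apply: contrapT => ny.
have O0 : b @^-1` (~` range g) = set0.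
  apply: df; first exact/open_preimage/closed_openC.
  by move=> a /=; apply; exists (t a) => //; exact: (congr1 (@^~ a) e).
suff : (b @^-1` (~` range g)) y by rewrite O0.
by move=> [c _ gcy]; apply: ny; exists c.
Qed.

Lemma lifts_dense_closed_embedding (C D : topologicalType) (g : C -> D) :
  continuous g ->
  (forall (A B : topologicalType) (f : A -> B),
     continuous f -> dense (range f) -> lifts f g) ->
  closed_embedding g.
Proof.
(* A single square, for the corestriction of g to the closure of its image,
   yields injectivity, closedness and the subspace topology. *)
move=> cg L; pose K := closure (range g).
have Kg c : K (g c) by apply: subset_closure; exists c.
pose f (c : C) : K := SigSub (mem_set (Kg c)).
have cf : continuous f.
  by apply/continuousP => _ [V oV <-]; exact: (open_preimage cg oV).
have cK : continuous (set_val : K -> D) by apply/continuousP => V oV; exists V.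
have fd : dense (range f).
  apply/dense_rangeP => _ [V oV <-] nV; apply/seteqP; split=> // y /= Vy.
  have [_ [[c _ <-] Vgc]] := set_valP y V (open_nbhs_nbhs (conj oV Vy)).
  exact: (nV c).
have [|d [cd df gd]] := L _ _ f cf fd id set_val (fun _ => cvg_id) cK.
  by apply/funext.
have dfE c : d (f c) = c := congr1 (@^~ c) df.
split=> //.
- by move=> c1 c2 e; rewrite -(dfE c1) -(dfE c2); congr d; apply: val_inj.
- apply/closure_id/seteqP; split; first exact: subset_closure.
  by move=> y Ky; exists (d (SigSub (mem_set Ky))) => //; exact: (congr1 (@^~ _) gd).
- move=> U oU; have [V oV eV] := open_preimage cd oU.
  exists V; split=> //; apply/seteqP; split=> c /= => [Uc|Vgc].
    have : (d @^-1` U) (f c) by change (U (d (f c))); rewrite dfE.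
    by rewrite -eV.
  have : (set_val @^-1` V) (f c) by [].
  by rewrite eV; change (U (d (f c)) -> U c); rewrite dfE.
Qed.

Lemma rorth_lorth_kmapP (C D : topologicalType) (g : C -> D) :
  rorth (lorth (single kmap)) g <-> closed_embedding g.
Proof.
split=> [[cg L]|ceg].
  apply: lifts_dense_closed_embedding => // A B f cf df; apply: L.
  by apply/lorth_singleP; split=> //; exact/lifts_kmapP.
split=> [|A B f /lorth_singleP [_ /lifts_kmapP]]; first by case: ceg.
exact: closed_embedding_lifts_dense.
Qed.

Lemma rorth_iotaP (C D : topologicalType) (g : C -> D) :
  rorth (single iota_map) g <-> continuous g /\ forall y, exists c, g c = y.
Proof.
rewrite rorth_singleP; split=> [[cg L]|[cg sg]].
  split=> // y; have [|d [_ _ gd]] := L (fun e : Emp => match e with end) (fun=> y)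
    (@continuous_Emp _ _) (@continuous_Pt _ _).
    by apply/funext => -[].
  by exists (d bullet); exact: (congr1 (@^~ bullet) gd).
split=> // t b _ _ _; have [c gc] := sg (b bullet).
exists (fun=> c); split; [exact: cst_continuous|by apply/funext => -[]|].
by apply/funext => -[].
Qed.

Definition pt_false (_ : Pt) : bool := false.

Lemma pt_false_lorth_rorth_iota : lorth (rorth (single iota_map)) pt_false.
Proof.
split; first exact: continuous_Pt.
move=> C D g /rorth_iotaP [_ sg] t b _ _ e.
have [c gc] := sg (b true).
exists (fun x : bool => if x then c else t bullet); split.
- by apply/continuousP => V _; exact: discrete_open.
- by apply/funext => -[].
- by apply/funext => -[] //=; exact: (congr1 (@^~ bullet) e).
Qed.

Definition clopen_dense (A B : topologicalType) (f : A -> B) :=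
  forall W : set B, clopen W -> (forall a, ~ W (f a)) -> W = set0.

Lemma dense_clopen_dense (A B : topologicalType) (f : A -> B) :
  dense (range f) -> clopen_dense f.
Proof. by move=> /dense_rangeP df W [oW _]; exact: df. Qed.

Lemma clopen_dense_preimage0 (A B T : topologicalType) (f : A -> B) (b : B -> T)
    (W : set T) :
  clopen_dense f -> continuous b -> clopen W -> (forall a, ~ W (b (f a))) ->
  b @^-1` W = set0.
Proof. by move=> df cb cW; exact: df (preimage_clopen cW cb). Qed.

Lemma continuous_asbool (X : topologicalType) (W : set X) :
  clopen W -> continuous (fun x => `[< W x >]).
Proof.
move=> [oW cW]; apply/continuousP => S _; set b := fun x => _.
rewrite (_ : _ @^-1` _ = \bigcup_(x in S) b @^-1` [set x]).
  apply: bigcup_open => -[] _.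
  + rewrite (_ : _ @^-1` _ = W) //.
    by apply/seteqP; split=> y /=; rewrite /b; case: asboolP.
  + rewrite (_ : _ @^-1` _ = ~` W); first exact: closed_openC.
    by apply/seteqP; split=> y /=; rewrite /b; case: asboolP.
apply/seteqP; split=> [y Sby|y [x Sx bx]]; first by exists (b y).
by change (S (b y)); rewrite bx.
Qed.

Lemma lifts_pt_false_clopen_dense (A B : topologicalType) (f : A -> B) :
  lifts f pt_false -> clopen_dense f.
Proof.
move=> L W cW nW; have cb := continuous_asbool cW.
have [|d [_ _ jd]] := L (fun _ => bullet) _ (@cst_continuous _ _ _) cb.
  by apply/funext => a /=; rewrite asboolF //; exact: nW.
apply/seteqP; split=> // y Wy.
by have := congr1 (@^~ y) jd; rewrite /= /pt_false asboolT.
Qed.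

Section SumWithDiscrete.
Variables (A : topologicalType) (B : Type).

Definition sum_open : set_system (A + B) := fun U => open (inl @^-1` U).

Lemma sum_openT : sum_open setT. Proof. exact: openT. Qed.

Lemma sum_openI : setI_closed sum_open. Proof. by move=> U V; exact: openI. Qed.

Lemma sum_openU (I : Type) (F : I -> set (A + B)) :
  (forall i, sum_open (F i)) -> sum_open (\bigcup_i F i).
Proof. by move=> oF; apply: bigcup_open => i _; exact: oF. Qed.

Definition sum_discrete := topology_of_opens sum_openT sum_openI sum_openU.

Lemma clopen_range_inl : clopen (range inl : set sum_discrete).
Proof.
split.
  change (open (@inl A B @^-1` range inl)).
  rewrite (_ : _ @^-1` _ = setT); first exact: openT.
  by apply/seteqP; split=> // a; exists a.
rewrite -openC; change (open (@inl A B @^-1` ~` range inl)).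
rewrite (_ : _ @^-1` _ = set0); first exact: open0.
by apply/seteqP; split=> // a; apply; exists a.
Qed.

End SumWithDiscrete.

Lemma lorth_rorth_iota_clopen_embedding (A B : topologicalType) (g : A -> B) :
  lorth (rorth (single iota_map)) g ->
  [/\ injective g, initial_map g & clopen (range g)].
Proof.
move=> [cg L].
pose p (s : sum_discrete A B) : B := match s with inl a => g a | inr y => y end.
have pP : rorth (single iota_map) p.
  apply/rorth_iotaP; split=> [|y]; last by exists (inr y).
  by apply/continuousP => V oV; exact: (open_preimage cg oV).
have cinl : continuous (inl : A -> sum_discrete A B) by apply/continuousP.
have [|d [cd dg pd]] := L _ _ p pP inl id cinl (fun _ => cvg_id); first exact/funext.
have dgE a : d (g a) = inl a := congr1 (@^~ a) dg.
have pdE y : p (d y) = y := congr1 (@^~ y) pd.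
split.
- by move=> a1 a2 e; have := dgE a1; rewrite e dgE => -[].
- move=> U oU; exists (d @^-1` (inl @` U)); split.
    apply: open_preimage cd _; change (open (@inl A B @^-1` (inl @` U))).
    rewrite (_ : _ @^-1` _ = U) //; apply/seteqP; split=> [a [a' Ua' [<-]] //|a Ua].
    by exists a.
  apply/seteqP; split=> [a Ua|a]; rewrite /= dgE; first by exists a.
  by case=> a' Ua' [<-].
- rewrite (_ : range g = d @^-1` range inl).
    exact: preimage_clopen (@clopen_range_inl A B) cd.
  apply/seteqP; split=> [_ [a _ <-]|y [a _ day]]; first by exists a; rewrite ?dgE.
  by exists a => //; rewrite -(pdE y) -day.
Qed.

Lemma clopen_dense_lifts (A B C D : topologicalType) (f : A -> B) (g : C -> D) :
  clopen_dense f -> injective g -> initial_map g -> clopen (range g) -> lifts f g.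
Proof.
move=> df injg ig cg t b ct cb e; apply: lifts_in_range => // y.
apply: contrapT => ny.
have nW a : ~ (~` range g) (b (f a)).
  by apply; exists (t a) => //; exact: (congr1 (@^~ a) e).
suff : (b @^-1` (~` range g)) y.
  by rewrite (clopen_dense_preimage0 df cb (clopenC set0 cg) nW).
by move=> [c _ gc]; apply: ny; exists c.
Qed.

Definition iota_rll : mclass := lorth (lorth (rorth (single iota_map))).

Definition iota_rllr : mclass := rorth iota_rll.

Lemma iota_rllP (A B : topologicalType) (f : A -> B) :
  iota_rll f <-> continuous f /\ clopen_dense f.
Proof.
split=> [[cf L]|[cf df]].
  by split=> //; apply/lifts_pt_false_clopen_dense/L/pt_false_lorth_rorth_iota.
split=> // C D g /lorth_rorth_iota_clopen_embedding [injg ig cg].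
exact: clopen_dense_lifts.
Qed.

Lemma iota_rllr_closed_embedding (C D : topologicalType) (g : C -> D) :
  iota_rllr g -> closed_embedding g.
Proof.
move=> [cg L]; apply: lifts_dense_closed_embedding => // A B f cf df.
by apply: L; apply/iota_rllP; split=> //; exact: dense_clopen_dense.
Qed.

Lemma iota_rllrrl_closed_embedding (A B : topologicalType) (f : A -> B) :
  lorth (rorth iota_rllr) f -> closed_embedding f.
Proof.
move=> [cf L]; apply: lifts_Mmap_closed_embedding => //; apply: L.
split=> [|C D g /iota_rllr_closed_embedding]; first exact: continuous_Ept.
exact: closed_embedding_lifts_Mmap.
Qed.

Definition enumerable (T : Type) (S : set T) := exists e : nat -> T, S `<=` range e.

Lemma enumerable1 (T : Type) (x : T) : enumerable [set x].
Proof. by exists (fun=> x) => _ ->; exists 0%N. Qed.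

Lemma enumerableU (T : Type) (S1 S2 : set T) :
  enumerable S1 -> enumerable S2 -> enumerable (S1 `|` S2).
Proof.
move=> [e1 S1e] [e2 S2e].
exists (fun n => if odd n then e2 n./2 else e1 n./2) => x [/S1e|/S2e] [m _ <-].
  by exists m.*2 => //; rewrite odd_double doubleK.
by exists m.*2.+1 => //=; rewrite odd_double /= uphalf_double.
Qed.

(* Cantor: the tag n disagrees at (i, m) with the m-th enumerated element of [F i]. *)
Lemma diagonal_avoids (I : Type) (F : I -> set (I * nat -> Prop)) :
  exists n, forall i, enumerable (F i) -> ~ F i n.
Proof.
have [e eP] : {e : I -> nat -> I * nat -> Prop &
    forall i, enumerable (F i) -> F i `<=` range (e i)}.
  apply: (@choice _ _ (fun i e => enumerable (F i) -> F i `<=` range e)) => i.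
  have [[e Fe]|nF] := pselect (enumerable (F i)); first by exists e.
  by exists (fun _ _ => True) => /nF.
exists (fun im => ~ e im.1 im.2 im) => i /eP Fe /Fe [m _ emn].
have /= E := congr1 (@^~ (i, m)) emn.
have nP : ~ e i m (i, m) by move=> P; move: (P); rewrite {1}E; apply.
by apply: (nP); rewrite E.
Qed.

(* [tagged_space] is B x (option tag), where the neighbourhoods of [None] in the
   second factor are co-enumerable and the points (x, None) with x outside R are
   isolated.  Tags are indexed by B x set C so that [diagonal_avoids] applies to
   families of enumerable sets of tags indexed by points of B and subsets of C. *)
Section TaggedSpace.
Variables (B C : topologicalType) (R : set B).

Definition tag := (B * set C) * nat -> Prop.

Definition cosmall (S : set tag) (k : option tag) : Prop :=
  if k is Some n then ~ S n else True.

Definition tag_open (N : set (option tag)) :=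
  N None -> exists2 S, enumerable S & cosmall S `<=` N.

Definition admissible (q : B * option tag) := q.2 = None -> R q.1.

Definition tagged_open (U : set (B * option tag)) :=
  forall p, U p -> admissible p -> exists U1 N,
    [/\ open U1, tag_open N, U1 p.1, N p.2 &
        forall q, admissible q -> U1 q.1 -> N q.2 -> U q].

Lemma sub_cosmall (S S' : set tag) : S `<=` S' -> cosmall S' `<=` cosmall S.
Proof. by move=> SS' [n|] //= nS' /SS'. Qed.

Lemma tag_openT : tag_open setT.
Proof. by move=> _; exists set0 => //; exists (fun _ _ => True). Qed.

Lemma tagged_openT : tagged_open setT.
Proof.
by move=> p _ _; exists setT, setT; split=> //; [exact: openT|exact: tag_openT].
Qed.

Lemma tagged_openI : setI_closed tagged_open.
Proof.
move=> U V oU oV p [Up Vp] ap.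
have [U1 [N1 [oU1 oN1 U1p N1p H1]]] := oU p Up ap.
have [U2 [N2 [oU2 oN2 U2p N2p H2]]] := oV p Vp ap.
exists (U1 `&` U2), (N1 `&` N2); split=> //; first exact: openI.
- move=> [/oN1 [S1 eS1 HS1] /oN2 [S2 eS2 HS2]].
  exists (S1 `|` S2); first exact: enumerableU.
  by move=> k Sk; split; [apply/HS1/(sub_cosmall (@subsetUl _ S1 S2))|
                          apply/HS2/(sub_cosmall (@subsetUr _ S1 S2))].
- by move=> q aq [] ? ? [] ? ?; split; [apply: H1|apply: H2].
Qed.

Lemma tagged_openU (I : Type) (F : I -> set (B * option tag)) :
  (forall i, tagged_open (F i)) -> tagged_open (\bigcup_i F i).
Proof.
move=> oF p [i _ Fip] ap.
have [U1 [N [oU1 oN U1p Np H]]] := oF i p Fip ap.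
by exists U1, N; split=> // q aq U1q Nq; exists i => //; exact: H.
Qed.

Definition tagged_space := topology_of_opens tagged_openT tagged_openI tagged_openU.

Lemma continuous_tagged_fst : continuous (fst : tagged_space -> B).
Proof.
apply/continuousP => V oV; rewrite topology_of_opensE => p Vp _; exists V, setT.
by split=> //; exact: tag_openT.
Qed.

Lemma clopen_tagged (n : tag) : clopen [set q : tagged_space | q.2 = Some n].
Proof.
rewrite /clopen -openC !topology_of_opensE; split=> [p pn _|].
  by exists setT, [set k | k = Some n]; split=> //; exact: openT.
move=> p /= pn _; exists setT, [set k | k <> Some n]; split=> //.
  exact: openT.
by move=> _; exists [set n]; [exact: enumerable1|move=> [m|] //= nmn [/nmn]].
Qed.

Lemma clopen_admissible : clopen [set q : tagged_space | admissible q].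
Proof.
rewrite /clopen -openC !topology_of_opensE.
split=> [p ap _|]; last by move=> p /= nap /nap.
by exists setT, setT; split=> //; [exact: openT|exact: tag_openT].
Qed.

Lemma tagged_section_continuous (d : tagged_space -> C) : closed R -> continuous d ->
  exists n, continuous (fun x => d (x, if `[< R x >] then None else Some n)).
Proof.
move=> clR cd.
(* [bad (x, W)] is enumerable when x \in R, by continuity of d at (x, None). *)
pose bad (i : B * set C) : set tag :=
  [set n | ~ exists2 U, open U & U i.1 /\ forall y, U y -> i.2 (d (y, Some n))].
have [n nbad] := diagonal_avoids bad.
exists n; apply/continuousP => W oW; rewrite openE => x /= Wx.
rewrite /interior nbhsE.
have odW : tagged_open (d @^-1` W) := open_preimage cd oW.
have [Rx|nRx] := pselect (R x); last first.
  rewrite asboolF // in Wx.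
  have [U1 [N [oU1 _ U1x Nn H]]] := odW (x, Some n) Wx (fun E => ltac:(done)).
  exists (U1 `&` ~` R); first by split; [exact/openI/closed_openC|].
  by move=> y [U1y nRy] /=; rewrite asboolF //; exact: H.
rewrite asboolT // in Wx.
have [U1 [N [oU1 oN U1x Nnone H]]] := odW (x, None) Wx (fun _ => Rx).
have [S [e Se] SN] := oN Nnone.
have : ~ bad (x, W) n.
  apply: nbad; exists e => m bm; apply: Se; apply: contrapT => nSm; apply: bm.
  by exists U1 => //; split=> // y U1y; apply: H => //; exact: SN.
move=> /contrapT [U2 oU2 [U2x HU2]].
exists (U1 `&` U2); first by split; [exact: openI|].
move=> y [U1y U2y] /=; case: asboolP => Ry; last exact: HU2.
by apply: H => //; exact: Nnone.
Qed.

End TaggedSpace.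

Definition untagged (A B C : topologicalType) (f : A -> B) (a : A) :
  tagged_space C (range f) := (f a, None).

Lemma untagged_iota_rllr (A B C : topologicalType) (f : A -> B) :
  closed_embedding f -> iota_rllr (untagged C f).
Proof.
move=> [cf injf _ inf]; set g := untagged C f.
have adm_g a : admissible (range f) (g a) by move=> _; exists a.
split=> [|A' B' f' /iota_rllP [_ df'] t b _ cb e].
  apply/continuousP => U; rewrite topology_of_opensE => oU.
  rewrite openE => a Ua; rewrite /interior nbhsE.
  have [U1 [N [oU1 _ U1fa Nnone H]]] := oU (g a) Ua (adm_g a).
  exists (f @^-1` U1); first by split=> //; exact: open_preimage.
  by move=> a' U1fa'; apply: H => // _; exists a'.
have ebf a : b (f' a) = g (t a) := esym (congr1 (@^~ a) e).
have b_none y : (b y).2 = None.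
  case E : (b y).2 => [n|] //; exfalso.
  have : (b @^-1` [set q | q.2 = Some n]) y := E.
  rewrite (clopen_dense_preimage0 df' cb (clopen_tagged _ n)) // => a.
  by rewrite /= ebf.
have b_adm y : admissible (range f) (b y).
  apply: contrapT => nadm.
  have : (b @^-1` ~` [set q | admissible (range f) q]) y := nadm.
  have cnadm := clopenC set0 (clopen_admissible C (range f)).
  rewrite (clopen_dense_preimage0 df' cb cnadm) // => a.
  by rewrite /= ebf; apply; exact: adm_g.
apply: lifts_in_range => //.
- by move=> a1 a2 [/injf].
- move=> U /inf [V [oV ->]]; exists [set q : tagged_space C (range f) | V q.1].
  by split=> //; exact: (open_preimage (@continuous_tagged_fst B C (range f)) oV).
- move=> y; have [a _ fa] := b_adm y (b_none y).
  by exists a; rewrite /g /untagged fa -(b_none y); case: (b y).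
Qed.

Lemma closed_embedding_iota_rllrrl (A B : topologicalType) (f : A -> B) :
  closed_embedding f -> lorth (rorth iota_rllr) f.
Proof.
move=> cef; have [cf _ clf _] := cef.
split=> // C D h [_ Lh] t b ct cb e.
have cbfst : continuous (fun q : tagged_space C (range f) => b q.1).
  move=> q; apply: continuous_comp; last exact: cb.
  exact: (@continuous_tagged_fst B C (range f)).
have [|d [cd dg hd]] := Lh _ _ _ (untagged_iota_rllr C cef) t _ ct cbfst.
  exact: e.
have [n cdn] := tagged_section_continuous clf cd.
exists (fun x => d (x, if `[< range f x >] then None else Some n)); split=> //.
  apply/funext => a /=; rewrite asboolT; last by exists a.
  exact: (congr1 (@^~ a) dg).
by apply/funext => x; exact: (congr1 (@^~ (x, _)) hd).
Qed.

Lemma iota_rllrrlP (A B : topologicalType) (f : A -> B) :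
  lorth (rorth iota_rllr) f <-> closed_embedding f.
Proof.
by split; [exact: iota_rllrrl_closed_embedding|exact: closed_embedding_iota_rllrrl].
Qed.

Theorem mainTheorem15 :
  same_class (lorth (rorth (rorth (lorth (lorth (rorth (single iota_map)))))))
             (lorth (single Mmap)) /\
  same_class (lorth (single Mmap)) (rorth (lorth (single kmap))) /\
  same_class (rorth (lorth (single kmap))) closed_embedding.
Proof.
split; [|split] => A B f.
- by rewrite iota_rllrrlP lorth_MmapP.
- by rewrite lorth_MmapP rorth_lorth_kmapP.
- exact: rorth_lorth_kmapP.
Qed.
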